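(* Let $G$ be a finite group, $H\le G$ with $[G:H]=n$, $\pi:H\to A$ a homomorphism into an abelian group $A$, and $t_1,\dots,t_n$ representatives of the right cosets of $H$ in $G$ (so $G=\bigsqcup_i Ht_i$) with $1\in\{t_1,\dots,t_n\}$. Define $f:G\to A$ by $f(ht_i)=\pi(h)$ for $h\in H$. For $x\in G$ and each $i$, let $(i)x$ be the index with $t_ix\in Ht_{(i)x}$. Then: (i) $f^h=f$ for all $h\in H$, so $H\le \mathrm{Stab}_G(f)$; (ii) for all $x\in G$, $$\prod_{i=1}^n \pi\bigl(t_ixt_{(i)x}^{-1}\bigr)=\prod_{i=1}^n f^{t_i}(x)=\bigl(\overline f(x)\bigr)^m,\qquad m=[\mathrm{Stab}_G(f):H],$$ where $\overline f$ is the average function of $f$. In particular the transfer map $x\mapsto\prod_{i=1}^n \pi(t_ixt_{(i)x}^{-1})$ is a homomorphism $G\to A$.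
   Context: For a function $f:G\to A$ and $a\in G$, $f^a(x)=f(a)^{-1}f(ax)$. $\mathrm{Stab}_G(f)=\{a\in G: f^a=f\}$. The average function of $f:G\to A$ ($A$ abelian) is $\overline f(x)=\prod_{j} f^{g_j}(x)$, where $f^{g_1},\dots,f^{g_k}$ are the distinct elements of $\{f^g:g\in G\}$. *)

From HB Require Import structures.
From mathcomp Require Import all_boot all_order all_algebra all_fingroup.
Set Implicit Arguments. Unset Strict Implicit. Unset Printing Implicit Defensive.
Import GRing.Theory.
Local Open Scope ring_scope.

Section Defs.
Variables (gT : finGroupType) (A : zmodType).

(* f^a (x) = f(a)^{-1} f(a x), written additively *)
Definition fder (f : gT -> A) (a : gT) : gT -> A :=
  fun x => - f a + f (a * x)%g.

Definition stab (G : {set gT}) (f : gT -> A) : {set gT} :=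
  [set a in G | [forall x in G, fder f a x == f x]].

(* the restriction of a function to G, as a finite function (0 outside G),
   used to compare functions G -> A for equality *)
Definition restr (G : {set gT}) (f : gT -> A) : {ffun gT -> A} :=
  [ffun x => if x \in G then f x else 0].

(* average function: sum (= product, additively) of the distinct f^g, g in G *)
Definition avgf (G : {set gT}) (f : gT -> A) (x : gT) : A :=
  \sum_(F <- undup [seq restr G (fder f g) | g <- enum G]) F x.

End Defs.

(* Since f(h t_i) = pi(h), f is left H-equivariant, so f^{ht} = f^t and H stabilises f;
   writing t_i x = h_i t_{(i)x} gives f^{t_i}(x) = pi(h_i), which is the transfer term.
   The cocycle identity f^a(xy) = f^a(x) + f^{ax}(y), together with the fact that
   i |-> (i)x permutes the indices, makes the transfer a homomorphism.  Finally
   f^a = f^b on G iff b a^-1 stabilises f, so the representatives t_i giving the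
   same function f^a are those lying in the coset Stab(f) a, and there are exactly
   [Stab(f) : H] of them. *)
From HB Require Import structures.
From mathcomp Require Import all_boot all_order all_algebra all_fingroup.
Import GRing.Theory.
Local Open Scope ring_scope.

Set Implicit Arguments.
Unset Strict Implicit.

Section Derivative.
Variables (gT : finGroupType) (A : zmodType) (f : gT -> A).

Lemma fderM a x y : fder f a (x * y)%g = fder f a x + fder f (a * x)%g y.
Proof. by rewrite /fder mulgA addrA addrK. Qed.

Lemma fder_fder a b x : fder (fder f a) b x = fder f (a * b)%g x.
Proof.
rewrite /fder mulgA opprD opprK addrA; congr (_ + _).
by rewrite addrC addrA addNr add0r.
Qed.

Lemma fder1 : f 1%g = 0 -> fder f 1%g =1 f.
Proof. by move=> f1 x; rewrite /fder f1 oppr0 add0r mul1g. Qed.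

End Derivative.

Section Stabiliser.
Variables (gT : finGroupType) (A : zmodType) (G : {group gT}) (f : gT -> A).

Lemma stabP a : reflect (a \in G /\ {in G, fder f a =1 f}) (a \in stab G f).
Proof.
rewrite inE; apply: (iffP andP) => [[aG /forallP fa]|[aG fa]]; split=> //.
  by move=> x xG; apply/eqP/(implyP (fa x) xG).
by apply/forallP=> x; apply/implyP=> xG; apply/eqP; apply: fa.
Qed.

Lemma stab_subG : stab G f \subset G.
Proof. by apply/subsetP => a /stabP []. Qed.

Lemma restr_eqP (g h : gT -> A) : reflect {in G, g =1 h} (restr G g == restr G h).
Proof.
apply: (iffP eqP) => [e z zG|e].
  by have := congr1 (fun F : {ffun gT -> A} => F z) e; rewrite !ffunE zG.
by apply/ffunP => z; rewrite !ffunE; case: ifP => // /e.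
Qed.

Hypothesis f1 : f 1%g = 0.

Lemma group_set_stab : group_set (stab G f).
Proof.
apply/group_setP; split; first by apply/stabP; split; [exact: group1 | move=> x _; apply: fder1].
move=> a b /stabP [aG fa] /stabP [bG fb]; apply/stabP; split; first exact: groupM.
move=> x xG; rewrite -fder_fder /fder -/(fder f a b) -/(fder f a (b * x)%g).
by rewrite !fa ?groupM // -/(fder f b x) fb.
Qed.

Lemma restr_fder_eq_stab a b : a \in G -> b \in G ->
  (restr G (fder f b) == restr G (fder f a)) = ((b * a^-1)%g \in stab G f).
Proof.
move=> aG bG; apply/restr_eqP/stabP => [e|[_ e] x xG].
  split; first by rewrite groupM ?groupV.
  move=> x xG; rewrite -fder_fder /fder -/(fder f b a^-1) -/(fder f b (a^-1 * x)%g).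
  by rewrite !e ?groupM ?groupV // /fder mulgV mulKVg f1 addr0 opprK addNKr.
rewrite -[b](mulgKV a) -fder_fder /fder -/(fder f (b * a^-1)%g a).
by rewrite -/(fder f (b * a^-1)%g (a * x)%g) !e ?groupM.
Qed.

Lemma sum_fder_avgf (I : finType) (t : I -> gT) (m : nat) x :
  (forall i, t i \in G) ->
  (forall a, a \in G -> #|[set i | restr G (fder f (t i)) == restr G (fder f a)]| = m) ->
  x \in G -> \sum_i fder f (t i) x = avgf G f x *+ m.
Proof.
move=> tG cls xG; rewrite /avgf; set s := undup _.
rewrite (eq_bigr (fun i => \sum_(F <- s | F == restr G (fder f (t i))) F x)); last first.
  move=> i _; rewrite -big_filter filter_pred1_uniq ?undup_uniq //.
    by rewrite big_seq1 ffunE xG.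
  by rewrite mem_undup; apply: map_f; rewrite mem_enum.
rewrite (eq_bigr _ (fun i _ => big_mkcond _ _)) /= exchange_big /=.
rewrite -sumrMnl big_seq [RHS]big_seq; apply: eq_bigr => F Fs.
rewrite -big_mkcond sumr_const.
move: Fs; rewrite mem_undup => /mapP [a]; rewrite mem_enum => aG ->.
rewrite -(cls a aG); congr (_ *+ _); apply: eq_card => i; by rewrite inE eq_sym.
Qed.

End Stabiliser.

Section Transfer.
Variables (gT : finGroupType) (A : zmodType) (G H : {group gT}) (n : nat).
Variables (pi : gT -> A) (t : 'I_n -> gT) (f : gT -> A) (sigma : 'I_n -> gT -> 'I_n).
Hypotheses (sHG : H \subset G) (piM : {in H &, {morph pi : x y / (x * y)%g >-> x + y}}).
Hypotheses (tG : forall i, t i \in G) (tinj : injective (fun i => (H :* t i)%g)).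
Hypothesis tcov : [set (H :* t i)%g | i : 'I_n] = rcosets H G.
Hypothesis t1 : 1%g \in [seq t i | i : 'I_n].
Hypothesis fdef : forall i h, h \in H -> f (h * t i)%g = pi h.
Hypothesis sigmaP : forall i x, x \in G -> (t i * x)%g \in (H :* t (sigma i x))%g.

Lemma pi1 : pi 1%g = 0.
Proof.
have := piM (group1 H) (group1 H); rewrite mulg1 => e.
by apply: (addrI (pi 1%g)); rewrite addr0 -e.
Qed.

Lemma ft0 i : f (t i) = 0.
Proof. by rewrite -[t i]mul1g fdef ?group1 ?pi1. Qed.

Lemma f1 : f 1%g = 0.
Proof. by case/mapP: t1 => i _ ->; apply: ft0. Qed.

Lemma mem_rcoset_repr z : z \in G -> exists2 h, h \in H & exists i, z = (h * t i)%g.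
Proof.
move=> zG; have : (H :* z)%g \in rcosets H G by apply/rcosetsP; exists z.
rewrite -tcov => /imsetP [i _ e].
have : z \in (H :* t i)%g by rewrite -e rcoset_refl.
by case/rcosetP => h hH ->; exists h => //; exists i.
Qed.

Lemma f_mulHl h z : h \in H -> z \in G -> f (h * z)%g = pi h + f z.
Proof.
move=> hH /mem_rcoset_repr [h' h'H [i ->]].
by rewrite mulgA !fdef ?groupM // piM.
Qed.

Lemma fder_mulHl h b y : h \in H -> b \in G -> y \in G ->
  fder f (h * b)%g y = fder f b y.
Proof.
move=> hH bG yG; rewrite /fder -mulgA (f_mulHl (z := (b * y)%g)) ?groupM // f_mulHl //.
by rewrite opprD addrACA addNr add0r.
Qed.

Lemma fder_H h : h \in H -> {in G, fder f h =1 f}.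
Proof. by move=> hH x xG; rewrite -[h]mulg1 fder_mulHl ?group1 // fder1 // f1. Qed.

Lemma sub_stab : H \subset stab G f.
Proof.
by apply/subsetP=> h hH; apply/stabP; split; [apply: (subsetP sHG) | apply: fder_H].
Qed.

Lemma transfer_factorE i x :
  (t i * x)%g = (t i * x * (t (sigma i x))^-1 * t (sigma i x))%g.
Proof. by rewrite mulgKV. Qed.

Lemma transfer_factor_in i x : x \in G -> (t i * x * (t (sigma i x))^-1)%g \in H.
Proof. by move=> xG; rewrite -mem_rcoset sigmaP. Qed.

Lemma transfer_fder i x : x \in G ->
  pi (t i * x * (t (sigma i x))^-1)%g = fder f (t i) x.
Proof.
by move=> xG; rewrite /fder ft0 oppr0 add0r [in RHS]transfer_factorE fdef ?transfer_factor_in.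
Qed.

Lemma sigma_inj x : x \in G -> injective (sigma^~ x).
Proof.
move=> xG i j /= e; apply: tinj => /=; apply/rcoset_eqP.
have := sigmaP i xG; have := sigmaP j xG; rewrite e !mem_rcoset => hj hi.
have := groupM hi (groupVr hj).
by rewrite !invMg invgK !mulgA mulgKV mulgK.
Qed.

Lemma sum_fder_morph :
  {in G &, {morph (fun x => \sum_(i < n) fder f (t i) x) : x y / (x * y)%g >-> x + y}}.
Proof.
move=> x y xG yG /=.
rewrite (eq_bigr (fun i => fder f (t i) x + fder f (t (sigma i x)) y)).
  by rewrite big_split /=; congr (_ + _); rewrite [RHS](reindex_inj (sigma_inj xG)).
by move=> i _; rewrite fderM (transfer_factorE i x) fder_mulHl ?transfer_factor_in.
Qed.

Lemma card_repr_in_rcoset (K : {group gT}) a : H \subset K -> K \subset G -> a \in G ->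
  #|[set i | t i \in (K :* a)%g]| = #|K : H|%g.
Proof.
move=> sHK sKG aG; set P := [set i | t i \in (K :* a)%g].
have img : [set (p.1 * t p.2)%g | p in setX H P] = (K :* a)%g.
  apply/setP => y; apply/imsetP/idP.
    case=> [[h i]] /setXP [/= hH]; rewrite inE mem_rcoset => iK ->.
    by rewrite mem_rcoset -mulgA groupM // (subsetP sHK).
  move=> yKa; have yG : y \in G.
    by rewrite -[y](mulgKV a) groupM // (subsetP sKG) // -mem_rcoset.
  have [h hH [i ey]] := mem_rcoset_repr yG.
  exists (h, i) => //; apply/setXP; split => //=.
  move: yKa; rewrite inE !mem_rcoset ey -mulgA => hK.
  by rewrite -(groupMl _ ((subsetP sHK) h hH)).
have inj : {in setX H P &, injective (fun p => (p.1 * t p.2)%g)}.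
  move=> [h i] [h' j] /setXP [/= hH _] /setXP [/= h'H _] /= e.
  have ij : i = j.
    apply: tinj => /=; apply/rcoset_eqP; rewrite mem_rcoset.
    have -> : t i = (h^-1 * (h' * t j))%g by rewrite -e mulKg.
    by rewrite mulgA mulgK groupM ?groupV.
  by move: e; rewrite ij => /mulIg ->.
have := card_in_imset inj; rewrite img card_rcoset cardsX -(Lagrange sHK).
by move/eqP; rewrite eqn_pmul2l ?cardG_gt0 // => /eqP.
Qed.

Lemma card_fder_class a : a \in G ->
  #|[set i | restr G (fder f (t i)) == restr G (fder f a)]| = #|stab G f : H|%g.
Proof.
move=> aG; pose S := Group (@group_set_stab _ _ G f f1).
rewrite -(card_repr_in_rcoset (K := S) (a := a)) ?sub_stab ?stab_subG //.
by apply: eq_card => i; rewrite !inE (@restr_fder_eq_stab _ _ G f f1) ?tG // mem_rcoset.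
Qed.

End Transfer.

Unset Implicit Arguments.

Theorem mainTheorem6 (gT : finGroupType) (A : zmodType)
  (G H : {group gT}) (n : nat) (pi : gT -> A) (t : 'I_n -> gT)
  (f : gT -> A) (sigma : 'I_n -> gT -> 'I_n) :
  H \subset G ->
  #|G : H|%g = n ->
  {in H &, {morph pi : x y / (x * y)%g >-> x + y}} ->
  (forall i, t i \in G) ->
  injective (fun i => (H :* t i)%g) ->
  [set (H :* t i)%g | i : 'I_n] = rcosets H G ->
  (1%g \in [seq t i | i : 'I_n]) ->
  (forall i, forall h, h \in H -> f (h * t i)%g = pi h) ->
  (forall i x, x \in G -> (t i * x)%g \in (H :* t (sigma i x))%g) ->
  (* (i) *)
  ((forall h, h \in H -> {in G, fder f h =1 f}) /\ H \subset stab G f) /\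
  (* (ii) *)
  (forall x, x \in G ->
     \sum_(i < n) pi (t i * x * (t (sigma i x))^-1)%g
       = \sum_(i < n) fder f (t i) x
   /\ \sum_(i < n) fder f (t i) x = avgf G f x *+ #|stab G f : H|%g) /\
  (* in particular: the transfer is a homomorphism G -> A *)
  {in G &, {morph (fun x => \sum_(i < n) pi (t i * x * (t (sigma i x))^-1)%g)
              : x y / (x * y)%g >-> x + y}}.
Proof.
move=> sHG _ piM tG tinj tcov t1 fdef sigmaP.
have transferE x : x \in G ->
    \sum_(i < n) pi (t i * x * (t (sigma i x))^-1)%g = \sum_(i < n) fder f (t i) x.
  by move=> xG; apply: eq_bigr => i _; apply: (transfer_fder piM fdef sigmaP).
split; first by split; [apply: (fder_H piM tcov t1 fdef) | apply: (sub_stab sHG piM tcov t1)].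
split.
  move=> x xG; split; first exact: transferE.
  exact: (sum_fder_avgf tG (card_fder_class sHG piM tG tinj tcov t1 fdef)).
move=> x y xG yG /=; rewrite !transferE ?groupM //.
exact: (sum_fder_morph piM tG tinj tcov fdef sigmaP).
Qed.
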